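(* Let $X=\mathsf{X}_{A_0,A_1}$ be a vertex tree-shift. Then: - $X$ is uniformly strongly irreducible if and only if $X$ is uniformly block gluing; - $X$ is strongly irreducible if and only if $X$ is block gluing.
   Context: $\Sigma=\{0,1\}$. $\Sigma^*$ is the set of finite words, with $\epsilon$ the empty word. $|x|$ is the length of $x$, $\Sigma^k$ is the set of words of length $k$, and $\Sigma_n=\bigcup_{0\le k\le n}\Sigma^k$. A tree is $t:\Sigma^*\to\mathcal{A}$ with $\mathcal{A}$ finite, and we write $t_x=t(x)$. For $0$-$1$ matrices $A_0,A_1$ indexed by $\mathcal{A}$, the vertex tree-shift is $\mathsf{X}_{A_0,A_1}=\{t: A_0(t_x,t_{x0})=1,\ A_1(t_x,t_{x1})=1\ \forall x\in\Sigma^*\}$. The paper's convention is that tree-shifts of finite type are identified with vertex tree-shifts. A pattern $u$ is a map on a finite prefix-closed support $S(u)\subseteq\Sigma^*$. A pattern is accepted by $X$ if it occurs (at some node) in some $t\in X$. $B_n(X)=\{t|_{\Sigma_{n-1}}: t\in X\}$ is the set of $n$-blocks. For $w\in\Sigma^*$, $t|_{wS(v)}=v$ means $t_{wy}=v_y$ for all $y\in S(v)$. A leaf of $u$ is a $w\in S(u)$ with $w0,w1\notin S(u)$. A complete prefix code (CPC) is a finite set $P\subseteq\Sigma^*\setminus\{\epsilon\}$ such that no word of $P$ is a prefix of another, and every $x$ with $|x|\ge\max_{y\in P}|y|$ has a prefix in $P$. Patterns $u,v$ are connected through $P$ if there is $t\in X$ with $t|_{S(u)}=u$ and $t|_{wxS(v)}=v$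 for every leaf $w$ of $u$ and every $x\in P$. $X$ is: - block gluing (BG) if there is a CPC $P$ such that for every $n\ge1$ any $u,v\in B_n(X)$ are connected through $P$; - uniformly block gluing (UBG) if this holds with $P=\Sigma^k$ for some $k\ge1$; - strongly irreducible (SI) if there is a CPC $P$ through which any two patterns accepted by $X$ are connected; - uniformly strongly irreducible (USI) if this holds with $P=\Sigma^k$ for some $k\ge1$. *)

From mathcomp Require Import all_boot.
Set Implicit Arguments. Unset Strict Implicit. Unset Printing Implicit Defensive.

(* Words over Sigma = {0,1} are [seq bool] (false = 0, true = 1);
   the word "x0" is [rcons x false], "wx" is [w ++ x]. *)
Notation word := (seq bool).

Fixpoint words (k : nat) : seq word :=
  if k is k'.+1 then [seq b :: w | b <- [:: false; true], w <- words k']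
  else [:: [::]].

Definition Sigma_upto (n : nat) : seq word :=
  flatten [seq words k | k <- iota 0 n.+1].

Definition tree (A : finType) := word -> A.

(* Vertex tree-shift X_{A0,A1}; the 0-1 matrices indexed by A are
   given as boolean relations on A (entry = 1 iff relation holds). *)
Definition in_vshift (A : finType) (A0 A1 : rel A) (t : tree A) : Prop :=
  forall x : word, A0 (t x) (t (rcons x false)) /\ A1 (t x) (t (rcons x true)).

(* A pattern is a map u : word -> A together with a finite
   prefix-closed support S (only values on S matter). *)
Definition prefix_closed (S : seq word) : Prop :=
  forall x y : word, x ++ y \in S -> x \in S.

Definition accepted (A : finType) (A0 A1 : rel A) (S : seq word) (u : word -> A) : Prop :=
  exists t : tree A, exists x : word,
    in_vshift A0 A1 t /\ forall y, y \in S -> t (x ++ y) = u y.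

Definition is_block (A : finType) (A0 A1 : rel A) (n : nat) (u : word -> A) : Prop :=
  exists t : tree A, in_vshift A0 A1 t /\
    forall y, y \in Sigma_upto n.-1 -> t y = u y.

Definition is_leaf (S : seq word) (w : word) : Prop :=
  w \in S /\ rcons w false \notin S /\ rcons w true \notin S.

Definition is_cpc (P : seq word) : Prop :=
  (forall x, x \in P -> x != [::]) /\
  (forall x y, x \in P -> y \in P -> prefix x y -> x = y) /\
  (forall x : word, \max_(y <- P) size y <= size x ->
     exists2 y, y \in P & prefix y x).

Definition connected_through (A : finType) (A0 A1 : rel A)
  (S : seq word) (u : word -> A) (S' : seq word) (v : word -> A)
  (P : seq word) : Prop :=
  exists t : tree A, in_vshift A0 A1 t /\
    (forall y, y \in S -> t y = u y) /\
    (forall w x y, is_leaf S w -> x \in P -> y \in S' -> t (w ++ x ++ y) = v y).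

Definition blocks_connected (A : finType) (A0 A1 : rel A) (P : seq word) : Prop :=
  forall n, 1 <= n -> forall u v : word -> A,
    is_block A0 A1 n u -> is_block A0 A1 n v ->
    connected_through A0 A1 (Sigma_upto n.-1) u (Sigma_upto n.-1) v P.

Definition patterns_connected (A : finType) (A0 A1 : rel A) (P : seq word) : Prop :=
  forall (S : seq word) (u : word -> A) (S' : seq word) (v : word -> A),
    prefix_closed S -> prefix_closed S' ->
    accepted A0 A1 S u -> accepted A0 A1 S' v ->
    connected_through A0 A1 S u S' v P.

Definition block_gluing (A : finType) (A0 A1 : rel A) : Prop :=
  exists P, is_cpc P /\ blocks_connected A0 A1 P.

Definition uniformly_block_gluing (A : finType) (A0 A1 : rel A) : Prop :=
  exists k, 1 <= k /\ blocks_connected A0 A1 (words k).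

Definition strongly_irreducible (A : finType) (A0 A1 : rel A) : Prop :=
  exists P, is_cpc P /\ patterns_connected A0 A1 P.

Definition uniformly_strongly_irreducible (A : finType) (A0 A1 : rel A) : Prop :=
  exists k, 1 <= k /\ patterns_connected A0 A1 (words k).

(** Every pattern of [X] is a restriction of a tree of [X], so connecting
   patterns through [P] entails connecting blocks through [P]; the content of
   the theorem is the converse.  Membership in a vertex tree-shift is a
   condition on parent-child pairs only, so the subtree at any node of a tree
   of [X] may be replaced by any tree of [X] with the same root symbol.
   Gluing 1-blocks through [P] yields, for any two trees [t] and [s] of [X], a
   "bridge" tree of [X] with root symbol [t [::]] carrying [s [::]] at every
   node of [P].  To connect [u] to [v], take a tree realizing [u], replace the
   subtree at each leaf [w] of [u] by a bridge from that subtree to a tree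
   realizing [v], and then replace the subtree below each node of [P] in the
   bridge by the tree realizing [v]. *)

From mathcomp Require Import all_boot.
From Stdlib Require Import ClassicalEpsilon.
Set Implicit Arguments. Unset Strict Implicit.

Lemma prefix_total (p q z : word) :
  prefix p z -> prefix q z -> prefix p q || prefix q p.
Proof.
rewrite !prefixE => /eqP pz /eqP qz.
case: (leqP (size p) (size q)) => [le_pq | /ltnW le_qp].
- by rewrite -qz take_takel // pz eqxx.
- by rewrite -pz take_takel // qz eqxx orbT.
Qed.

Lemma prefix_rcons_inv (p x : word) c :
  prefix p (rcons x c) -> prefix p x \/ p = rcons x c.
Proof.
move=> pxc; have := size_prefix pxc; rewrite size_rcons leq_eqVlt ltnS.
case/orP=> [/eqP sz | le_px]; [right | left].
- by move: pxc; rewrite prefixE sz -(size_rcons x c) take_size => /eqP.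
- move: pxc; rewrite !prefixE -cats1 take_cat ltn_neqAle le_px andbT.
  case: (eqVneq (size p) (size x)) => [e | //].
  by rewrite e subnn take0 cats0 take_size.
Qed.

Lemma mem_words k (x : word) : (x \in words k) = (size x == k).
Proof.
elim: k x => [|k IH] x; first by case: x.
apply/allpairsP/idP => [[[b w] /= [_ hw ->]] | ]; first by rewrite /= eqSS -IH.
by case: x => [|b w] //= hw; exists (b, w); rewrite ?IH //; case: b.
Qed.

Lemma mem_Sigma_upto n (x : word) : (x \in Sigma_upto n) = (size x <= n).
Proof.
apply/flatten_mapP/idP.
- by case=> k; rewrite mem_iota add0n ltnS mem_words => /andP[_ kn] /eqP ->.
- by exists (size x); rewrite ?mem_iota ?add0n ?ltnS ?mem_words.
Qed.

Lemma prefix_closed_Sigma_upto n : prefix_closed (Sigma_upto n).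
Proof.
by move=> x y; rewrite !mem_Sigma_upto size_cat; apply: leq_trans; apply: leq_addr.
Qed.

Definition prefix_free (Q : seq word) : Prop :=
  forall p q, p \in Q -> q \in Q -> prefix p q -> p = q.

Lemma prefix_free_words k : prefix_free (words k).
Proof.
move=> p q; rewrite !mem_words => /eqP sp /eqP sq.
by rewrite prefixE sp -sq take_size => /eqP.
Qed.

Lemma leaf_prefix_eq (S : seq word) w y :
  prefix_closed S -> is_leaf S w -> y \in S -> prefix w y -> w = y.
Proof.
move=> closedS [_ [w0 w1]] yS /prefixP [[|c r] wcr]; first by rewrite wcr cats0.
have : rcons w c \in S by apply: (closedS _ r); rewrite cat_rcons -wcr.
by case: c wcr; rewrite ?(negbTE w0) ?(negbTE w1).
Qed.

Section Grafting.
Variables (A : finType) (A0 A1 : rel A).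

Lemma in_vshiftP (t : tree A) :
  in_vshift A0 A1 t <->
  forall x (c : bool), (if c then A1 else A0) (t x) (t (rcons x c)).
Proof.
split=> [tX x [] | tX x]; [exact: (tX x).2 | exact: (tX x).1 |].
exact: conj (tX x false) (tX x true).
Qed.

Definition subtree (t : tree A) (x : word) : tree A := fun z => t (x ++ z).

Lemma vshift_subtree t x : in_vshift A0 A1 t -> in_vshift A0 A1 (subtree t x).
Proof. by move=> tX z; rewrite /subtree -!rcons_cat. Qed.

(* Replaces the subtree of [t] at each node [p] of the prefix-free set [Q] by [F p]. *)
Definition graft (t : tree A) (Q : seq word) (F : word -> tree A) : tree A :=
  fun z => let p := nth [::] Q (find (fun q : word => prefix q z) Q) in
  if has (fun q : word => prefix q z) Q then F p (drop (size p) z) else t z.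

Variables (t : tree A) (Q : seq word) (F : word -> tree A).
Hypothesis freeQ : prefix_free Q.

Lemma graft_cat p y : p \in Q -> graft t Q F (p ++ y) = F p y.
Proof.
move=> pQ; have hasQ : has (fun q : word => prefix q (p ++ y)) Q.
  by apply/hasP; exists p; rewrite ?prefix_prefix.
rewrite /graft hasQ.
set q := nth _ _ _; have qQ : q \in Q by rewrite mem_nth -?has_find.
suff -> : q = p by rewrite drop_size_cat.
have := prefix_total (nth_find [::] hasQ) (prefix_prefix p y).
case/orP=> [qp | /(freeQ pQ qQ) pq]; first exact: freeQ.
by rewrite pq.
Qed.

Lemma graft_at p : p \in Q -> graft t Q F p = F p [::].
Proof. by move=> pQ; rewrite -{1}[p]cats0 graft_cat. Qed.

Lemma graft_out z : (forall p, p \in Q -> ~~ prefix p z) -> graft t Q F z = t z.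
Proof. by move=> outQ; rewrite /graft ifN //; apply/hasPn. Qed.

Hypothesis rootF : forall p, p \in Q -> F p [::] = t p.

Lemma graft_nil : graft t Q F [::] = t [::].
Proof.
have [nilQ | nilNQ] := boolP ([::] \in Q); first by rewrite graft_at ?rootF.
by apply: graft_out => p pQ; rewrite prefixs0; apply: contraNN nilNQ => /eqP <-.
Qed.

Lemma vshift_graft :
  in_vshift A0 A1 t -> (forall p, p \in Q -> in_vshift A0 A1 (F p)) ->
  in_vshift A0 A1 (graft t Q F).
Proof.
move=> /in_vshiftP tX FX; apply/in_vshiftP => x c.
have [/hasP [p pQ /prefixP [y ->]] | /hasPn outx] :=
  boolP (has (fun q : word => prefix q x) Q).
  by rewrite rcons_cat !graft_cat //; apply: (proj1 (in_vshiftP _) (FX p pQ)).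
rewrite graft_out //.
have [/hasP [p pQ /prefix_rcons_inv [px | pxc]] | /hasPn outxc] :=
  boolP (has (fun q : word => prefix q (rcons x c)) Q).
- by move: (outx p pQ); rewrite px.
- by rewrite -pxc graft_at // rootF // pxc.
- by rewrite graft_out.
Qed.

End Grafting.

Section Gluing.
Variables (A : finType) (A0 A1 : rel A).

Lemma patterns_connected_blocks P :
  patterns_connected A0 A1 P -> blocks_connected A0 A1 P.
Proof.
move=> connP n _ u v [tu [tuX tuE]] [tv [tvX tvE]].
apply: connP; try exact: prefix_closed_Sigma_upto.
- by exists tu; exists [::].
- by exists tv; exists [::].
Qed.

Lemma blocks_connected_bridge P (t s : tree A) :
  prefix_free P -> blocks_connected A0 A1 P ->
  in_vshift A0 A1 t -> in_vshift A0 A1 s ->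
  exists r, [/\ in_vshift A0 A1 r, r [::] = t [::] &
    forall x y, x \in P -> r (x ++ y) = s y].
Proof.
move=> freeP connP tX sX.
have root_block (r : tree A) : in_vshift A0 A1 r -> is_block A0 A1 1 (fun=> r [::]).
  by exists r; split=> // y; rewrite mem_Sigma_upto leqn0 => /nilP ->.
have [r [rX [rt rs]]] := connP 1 isT _ _ (root_block t tX) (root_block s sX).
have rootP x : x \in P -> s [::] = r x.
  by move=> xP; have := rs [::] x [::]; rewrite cats0 => ->.
exists (graft r P (fun=> s)); split.
- exact: vshift_graft.
- by rewrite graft_nil //; apply: rt.
- by move=> x y xP; rewrite graft_cat.
Qed.

Lemma blocks_connected_patterns P :
  prefix_free P -> blocks_connected A0 A1 P -> patterns_connected A0 A1 P.
Proof.
move=> freeP connP S u S' v closedS _ [tu [xu [tuX tuE]]] [tv [xv [tvX tvE]]].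
set T := subtree tu xu; set V := subtree tv xv.
have TX : in_vshift A0 A1 T by apply: vshift_subtree.
have VX : in_vshift A0 A1 V by apply: vshift_subtree.
have [bridge bridgeP] : exists bridge : word -> tree A, forall w,
    [/\ in_vshift A0 A1 (bridge w), bridge w [::] = T w &
    forall x y, x \in P -> bridge w (x ++ y) = V y].
  have ex_bridge w := blocks_connected_bridge freeP connP (vshift_subtree w TX) VX.
  exists (fun w => proj1_sig (constructive_indefinite_description _ (ex_bridge w))).
  move=> w; case: (constructive_indefinite_description _ _) => /= r [rX rT rV].
  by rewrite /subtree cats0 in rT; split.
pose L := [seq w <- S | (rcons w false \notin S) && (rcons w true \notin S)].
have leafL w : (w \in L) <-> is_leaf S w.
  by rewrite /L mem_filter andbC; split=> [/and3P [] | [-> [-> ->]]].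
have freeL : prefix_free L.
  by move=> p q /leafL pleaf /leafL [qS _]; apply: (leaf_prefix_eq closedS pleaf qS).
exists (graft T L bridge); split; [|split].
- by apply: vshift_graft => // w _; case: (bridgeP w).
- move=> y yS; have [yL | yNL] := boolP (y \in L).
    have [_ root_y _] := bridgeP y.
    by rewrite graft_at // root_y /T /subtree tuE.
  rewrite graft_out; first by rewrite /T /subtree tuE.
  move=> p /leafL pleaf; apply: contraNN yNL => py.
  by apply/leafL; rewrite -(leaf_prefix_eq closedS pleaf yS py).
- move=> w x y /leafL wL xP yS'.
  have [_ _ bridge_P] := bridgeP w.
  by rewrite graft_cat // bridge_P // /V /subtree tvE.
Qed.

End Gluing.

Theorem theorem3p6 (A : finType) (A0 A1 : rel A) :
  (uniformly_strongly_irreducible A0 A1 <-> uniformly_block_gluing A0 A1) /\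
  (strongly_irreducible A0 A1 <-> block_gluing A0 A1).
Proof.
split; split.
- by case=> k [k1 connk]; exists k; split=> //; apply: patterns_connected_blocks.
- case=> k [k1 connk]; exists k; split=> //.
  exact: blocks_connected_patterns (@prefix_free_words k) connk.
- by case=> P [cpcP connP]; exists P; split=> //; apply: patterns_connected_blocks.
- case=> P [cpcP connP]; exists P; split=> //.
  by case: cpcP => _ [freeP _]; apply: blocks_connected_patterns.
Qed.
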